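(* Let $n\ge 2$ and let $(u,v)$ be an MAB pair of binary words with $|u|=|v|=n$. Put $i=\mathrm{lsb}(u,v)$ and $j=\mathrm{lsb}(v,u)$. Then $i+j\le n$ if and only if there exist words $\alpha,\beta,\beta',\alpha'\in\Sigma^+$ and $x,x'\in\Sigma^*$ such that $u=\alpha x\beta$, $v=\beta' x'\alpha'$, $\beta\sim_{\mathrm{abl}}\beta'$, $\alpha\sim_{\mathrm{abl}}\alpha'$, $|\alpha|=j$, $|\beta|=i$, and both $(\beta,\beta')$ and $(\alpha,\alpha')$ are MAU pairs.
   Context: Let $\Sigma=\{a,b\}$. For a word $w$ and a letter $c$, $|w|_c$ denotes the number of occurrences of $c$ in $w$. Two words $x,y$ are abelian equivalent, written $x\sim_{\mathrm{abl}}y$, if $|x|_c=|y|_c$ for all $c\in\Sigma$. For words $u,v$: a pair $(x,y)$ is an internal abelian-border of $(u,v)$ if $x$ is a nonempty proper suffix of $u$, $y$ is a proper prefix of $v$, and $x\sim_{\mathrm{abl}}y$; it is an external abelian-border of $(u,v)$ if $x$ is a nonempty proper prefix of $u$, $y$ is a proper suffix of $v$, and $x\sim_{\mathrm{abl}}y$. The pair $(u,v)$ is mutually abelian-bordered (MAB) if it has both an internal and an external abelian-border, and mutually abelian-unbordered (MAU) if it has neither. If $(u,v)$ has an internal abelian-border, $\mathrm{sb}(u,v)$ denotes its internal abelian-border $(x,y)$ of minimal length and $\mathrm{lsb}(u,v)=|x|$ is that minimal length. *)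

From HB Require Import structures.
From mathcomp Require Import all_boot.
Set Implicit Arguments. Unset Strict Implicit. Unset Printing Implicit Defensive.

Inductive letter := La | Lb.
Definition letter_eqb (x y : letter) : bool :=
  match x, y with La, La | Lb, Lb => true | _, _ => false end.
Lemma letter_eqP : Equality.axiom letter_eqb.
Proof. by case; case; constructor. Qed.
HB.instance Definition _ := hasDecEq.Build letter letter_eqP.

Definition word := seq letter.

Definition occ (w : word) (c : letter) : nat := count_mem c w.

Definition abl (x y : word) : Prop := forall c : letter, occ x c = occ y c.

Definition int_border (u v x y : word) : Prop :=
  [/\ 0 < size x, size x < size u, suffix x u,
      size y < size v & prefix y v] /\ abl x y.

Definition ext_border (u v x y : word) : Prop :=
  [/\ 0 < size x, size x < size u, prefix x u,
      size y < size v & suffix y v] /\ abl x y.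

Definition has_int_border (u v : word) : Prop := exists x y, int_border u v x y.
Definition has_ext_border (u v : word) : Prop := exists x y, ext_border u v x y.

Definition MAB (u v : word) : Prop := has_int_border u v /\ has_ext_border u v.
Definition MAU (u v : word) : Prop := ~ has_int_border u v /\ ~ has_ext_border u v.

Definition is_lsb (u v : word) (i : nat) : Prop :=
  (exists x y, int_border u v x y /\ size x = i) /\
  (forall x y, int_border u v x y -> i <= size x).

(** A minimal internal abelian-border [(beta, beta')] of [(u, v)] is itself MAU:
    an internal border of [(beta, beta')] is a shorter internal border of [(u, v)],
    and cutting an external border [(x, y)] off [beta = x z], [beta' = w y] leaves
    the shorter internal border [(z, w)] of [(u, v)].  With [alpha'] and [alpha] the
    minimal internal border of [(v, u)], the condition [i + j <= n] says exactly
    that [alpha] and [beta] fit side by side in [u] (and [beta'], [alpha'] in [v]). *)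

From mathcomp Require Import all_boot.
From mathcomp Require Import zify.
Set Implicit Arguments. Unset Strict Implicit.

Lemma size_occ (w : word) : size w = occ w La + occ w Lb.
Proof. by elim: w => [|[] w IH] //=; rewrite /occ /= in IH *; rewrite IH; lia. Qed.

Lemma abl_size x y : abl x y -> size x = size y.
Proof. by move=> Hxy; rewrite !size_occ !Hxy. Qed.

Lemma abl_sym x y : abl x y -> abl y x.
Proof. by move=> Hxy c; rewrite Hxy. Qed.

Lemma abl_cat_cross x z w y : abl (x ++ z) (w ++ y) -> abl x y -> abl z w.
Proof. by move=> H1 H2 c; move: (H1 c) (H2 c); rewrite /occ !count_cat; lia. Qed.

Lemma ext_border_int_border u v x y : ext_border u v x y -> int_border v u y x.
Proof.
move=> [[x0 xu px yv sy] Hxy]; have sxy := abl_size Hxy.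
by split; [split; lia | exact: abl_sym].
Qed.

Lemma int_border_ext_border u v x y : int_border u v x y -> ext_border v u y x.
Proof.
move=> [[x0 xu sx yv py] Hxy]; have sxy := abl_size Hxy.
by split; [split; lia | exact: abl_sym].
Qed.

Lemma MAU_sym u v : MAU u v -> MAU v u.
Proof.
move=> [Ni Ne]; split.
- by move=> [x [y /int_border_ext_border Hb]]; apply: Ne; exists y, x.
- by move=> [x [y /ext_border_int_border Hb]]; apply: Ni; exists y, x.
Qed.

Lemma int_border_trans u v b b' x y :
  int_border b b' x y -> int_border u v b b' -> int_border u v x y.
Proof.
move=> [[x0 xb sx yb' py] Hxy] [[_ bu sb b'v pb'] _]; split => //.
by split; [exact: x0 | lia | exact: suffix_trans sx sb | lia | exact: prefix_trans py pb'].
Qed.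

Lemma ext_border_cut u v b b' x y :
  ext_border b b' x y -> int_border u v b b' ->
  exists z w, int_border u v z w /\ size z < size b.
Proof.
move=> [[x0 xb /prefixP [z Ez] yb' /suffixP [w Ew]] Hxy] [[b0 bu sb b'v pb'] Hbb'].
change word in z; change word in w.
have Hzw : abl z w by apply: (abl_cat_cross _ Hxy); rewrite -Ez -Ew.
have szw := abl_size Hzw.
have szb : size b = size x + size z by rewrite Ez size_cat.
have swb' : size b' = size w + size y by rewrite Ew size_cat.
exists z, w; split; last lia.
split => //; split; try lia.
- by apply: suffix_trans sb; rewrite Ez suffix_suffix.
- by apply: prefix_trans pb'; rewrite Ew prefix_prefix.
Qed.

Lemma minimal_int_border_MAU u v b b' :
  int_border u v b b' -> (forall x y, int_border u v x y -> size b <= size x) ->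
  MAU b b'.
Proof.
move=> Hb Hmin; split.
- move=> [x [y Hxy]]; have := Hmin x y (int_border_trans Hxy Hb).
  by case: Hxy => [[_ xb _ _ _] _]; lia.
- move=> [x [y /ext_border_cut /(_ Hb) [z [w [Hzw szb]]]]].
  by have := Hmin z w Hzw; lia.
Qed.

Lemma is_lsb_MAU u v i :
  is_lsb u v i -> exists x y, [/\ int_border u v x y, size x = i & MAU x y].
Proof.
move=> [[x [y [Hxy <-]]] Hmin]; exists x, y; split => //.
by apply: minimal_int_border_MAU Hxy _ => x' y' /Hmin.
Qed.

Lemma prefix_suffix_cat (T : eqType) (s p q : seq T) :
  size p + size q <= size s -> prefix p s -> suffix q s ->
  s = p ++ drop (size p) (take (size s - size q) s) ++ q.
Proof.
rewrite prefixE suffixE => le_pq /eqP pE /eqP qE.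
have le_p : size p <= size s - size q by lia.
by rewrite -{1}pE -{2}qE -(take_takel _ le_p) catA !cat_take_drop.
Qed.

Theorem mainTheorem1 (n : nat) (u v : word) (i j : nat) :
  2 <= n -> size u = n -> size v = n -> MAB u v ->
  is_lsb u v i -> is_lsb v u j ->
  (i + j <= n <->
   exists (alpha beta beta' alpha' x x' : word),
     [/\ 0 < size alpha, 0 < size beta, 0 < size beta' & 0 < size alpha'] /\
     [/\ u = alpha ++ x ++ beta, v = beta' ++ x' ++ alpha',
         abl beta beta' & abl alpha alpha'] /\
     [/\ size alpha = j, size beta = i, MAU beta beta' & MAU alpha alpha']).
Proof.
move=> _ Hu Hv _ /is_lsb_MAU [b [b' [Hb <- Mb]]] /is_lsb_MAU [a' [a [Ha <- Ma]]].
case: Hb Ha => [[b0 _ sbu _ pb'v] Hbb'] [[a0 _ sa'v _ pau] Ha'a].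
have sbb' := abl_size Hbb'; have saa' := abl_size Ha'a.
split => [le_ij | [alpha [beta [_ [_ [x [_ [_ [[Eu _ _ _] [<- <- _ _]]]]]]]]]]; last first.
  by rewrite -Hu Eu !size_cat; lia.
exists a, b, b', a', (drop (size a) (take (size u - size b) u)),
  (drop (size b') (take (size v - size a') v)).
split; first by split; lia.
split; split; [| | exact: Hbb' | exact: abl_sym | by rewrite saa' | by [] | exact: Mb
  | exact: MAU_sym].
- have le_ab : size a + size b <= size u by lia.
  exact: prefix_suffix_cat le_ab pau sbu.
- have le_b'a' : size b' + size a' <= size v by lia.
  exact: prefix_suffix_cat le_b'a' pb'v sa'v.
Qed.
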